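(* Let $B$ be a connected building set on $[n]$. Then $$F(P_B)=\sum_{v}F(T_v),$$ where the sum runs over all vertices $v$ of the nestohedron $P_B$ and $T_v$ is the $B$-tree of $v$.
   Context: A building set on a finite set $V$ is a collection $B$ of nonempty subsets of $V$ such that $\{v\}\in B$ for all $v\in V$ and such that $I,J\in B$, $I\cap J\neq\emptyset$ imply $I\cup J\in B$; it is connected if $V\in B$. The nestohedron of $B$ is $P_B=\sum_{I\in B}\mathrm{Conv}\{e_i: i\in I\}\subset\mathbb{R}^V$. For a convex polytope $Q\subset\mathbb{R}^n$, $f:[n]\to\mathbb{N}=\{1,2,\dots\}$ is $Q$-generic if $x\mapsto\sum_i f(i)x_i$ attains its maximum over $Q$ at a unique point, and $F(Q)=\sum_{f\ Q\text{-generic}}x_{f(1)}\cdots x_{f(n)}$. For a connected building set $B$ on $[n]$, a nested set is a subcollection $N\subseteq B\setminus\{[n]\}$ such that (N1) any two members of $N$ are either comparable by inclusion or disjoint, and (N2) the union of any $p\ge2$ pairwise disjoint members of $N$ does not belong to $B$. The facets of $P_B$ are $F_I=P_B\cap\{x:\sum_{i\in I}x_i=|\{J\in B:J\subseteq I\}|\}$ for $I\in B\setminus\{[n]\}$, and $v\mapsto N_v=\{I: v\in F_I\}$ is a bijection from the vertices of $P_B$ to the maximal nested sets. For a vertex $v$ and $I\in N_v\cup\{[n]\}$, the set $I\setminus\bigcup\{J\in N_v:J\subsetneq I\}$ consists of a single element $i_I$, and $I\mapsto i_I$ is a bijection $N_v\cup\{[n]\}\to[n]$. The poset $P_v$ on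 $[n]$ is defined by $i_I\le i_J$ iff $I\subseteq J$; its Hasse diagram is a rooted tree $T_v$ (the $B$-tree of $v$) with root $i_{[n]}$. For a rooted tree $T$, a $T$-partition is a function $f$ from the vertices to $\mathbb{N}$ with $f(u)<f(w)$ whenever $w$ is the parent of $u$, and $F(T)=\sum_f\prod_u x_{f(u)}$ over all $T$-partitions. *)

From HB Require Import structures.
From mathcomp Require Import all_boot all_order all_algebra.
From Stdlib Require Import ClassicalEpsilon.
Set Implicit Arguments. Unset Strict Implicit. Unset Printing Implicit Defensive.
Import Order.TTheory GRing.Theory Num.Theory.
Local Open Scope ring_scope.

Definition asbool (P : Prop) : bool :=
  if excluded_middle_informative P then true else false.

Section Defs.
Variables (R : realFieldType) (n : nat).
Implicit Types (B : {set {set 'I_n}}) (x y v : {ffun 'I_n -> R}).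

Definition building_set B : Prop :=
  [/\ (forall I, I \in B -> I != set0),
      (forall i : 'I_n, [set i] \in B) &
      (forall I J, I \in B -> J \in B -> I :&: J != set0 -> I :|: J \in B)].

Definition connected_bs B : Prop := [set: 'I_n] \in B.

Definition in_simplex (I : {set 'I_n}) y : Prop :=
  [/\ (forall i, 0 <= y i), (forall i, i \notin I -> y i = 0) & \sum_i y i = 1].

Definition nestohedron B (x : {ffun 'I_n -> R}) : Prop :=
  exists y : {set 'I_n} -> {ffun 'I_n -> R},
    (forall I, I \in B -> in_simplex I (y I)) /\ x = \sum_(I in B) y I.

Definition lin (c : 'I_n -> R) x : R := \sum_i c i * x i.

Definition maximizer (Q : {ffun 'I_n -> R} -> Prop) (c : 'I_n -> R) x : Prop :=
  Q x /\ forall y, Q y -> lin c y <= lin c x.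

Definition generic (Q : {ffun 'I_n -> R} -> Prop) (f : 'I_n -> nat) : Prop :=
  (forall i, (0 < f i)%N) /\
  exists x, maximizer Q (fun i => (f i)%:R) x /\
            forall y, maximizer Q (fun i => (f i)%:R) y -> y = x.

Definition is_vertex (Q : {ffun 'I_n -> R} -> Prop) v : Prop :=
  exists c : 'I_n -> R, maximizer Q c v /\ forall y, maximizer Q c y -> y = v.

(* Coefficient of the monomial x_{m_1}...x_{m_k} (m as a multiset) in F(Q),
   restricted to functions with values <= N. *)
Definition coefF (Q : {ffun 'I_n -> R} -> Prop) (N : nat) (m : seq nat) : nat :=
  #|[set f : {ffun 'I_n -> 'I_N.+1} |
      asbool (generic Q (fun i => val (f i))) &&
      perm_eq [seq val (f i) | i <- enum 'I_n] m]|.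

(* N_v = { I in B \ {[n]} : v in F_I } *)
Definition nestedv B v : {set {set 'I_n}} :=
  [set I in B | (I != [set: 'I_n]) &&
     (\sum_(i in I) v i == (#|[set J in B | J \subset I]|)%:R)].

Definition nestedv' B v := nestedv B v :|: [set [set: 'I_n]].

Definition ielt B v (I : {set 'I_n}) : option 'I_n :=
  [pick i in I :\: \bigcup_(J in nestedv B v | J \proper I) J].

Definition lev B v (i j : 'I_n) : bool :=
  [exists I in nestedv' B v, exists J in nestedv' B v,
     [&& ielt B v I == Some i, ielt B v J == Some j & I \subset J]].

(* w covers u in P_v, i.e. w is the parent of u in the Hasse diagram T_v *)
Definition coverv B v (u w : 'I_n) : bool :=
  [&& u != w, lev B v u w &
      ~~ [exists z, [&& z != u, z != w, lev B v u z & lev B v z w]]].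

(* Coefficient of the monomial m in F(T_v), restricted to values <= N. *)
Definition coefT B v (N : nat) (m : seq nat) : nat :=
  #|[set g : {ffun 'I_n -> 'I_N.+1} |
      [forall i, (0 < val (g i))%N] &&
      [forall u, forall w, coverv B v u w ==> (val (g u) < val (g w))%N] &&
      perm_eq [seq val (g i) | i <- enum 'I_n] m]|.

End Defs.

From HB Require Import structures.
From mathcomp Require Import all_boot all_order all_algebra.
From Stdlib Require Import ClassicalEpsilon.
Import Order.TTheory GRing.Theory Num.Theory.
Set Implicit Arguments. Unset Strict Implicit. Unset Printing Implicit Defensive.

(* A linear functional c is maximized over the Minkowski sum P_B termwise, so
   it has a unique maximizer iff it has a unique argmax a_I on every I in B,
   and the maximizer is then sum_(I in B) e_(a_I).  Given such a c with vertex
   v, the faces F_I containing v are those I in B that contain every J in B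
   with a_J in I; these are exactly the sets U_i = {i} u U{J in B | a_J = i},
   with i_(U_i) = i, so that i <= j in P_v iff i is in U_j.  Hence g is a
   T_v-partition iff on every I in B the function g attains its maximum only
   at a_I, i.e. iff g is generic with vertex v: every generic g is counted in
   F(T_v) for exactly one vertex v. *)

Lemma asboolP (P : Prop) : reflect P (asbool P).
Proof. by rewrite /asbool; case: excluded_middle_informative => h; constructor. Qed.

Local Open Scope ring_scope.

Section LinearFunctionals.
Variables (R : realFieldType) (n : nat).

Definition basis_vec (i : 'I_n) : {ffun 'I_n -> R} := [ffun k => (k == i)%:R].

Lemma lin_basis_vec c i : lin c (basis_vec i) = c i.
Proof.
rewrite /lin (bigD1 i) //= big1 => [|j ji]; rewrite !ffunE ?eqxx ?mulr1 ?addr0 //.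
by rewrite (negbTE ji) mulr0.
Qed.

Lemma lin_sum (T : Type) c (r : seq T) (P : pred T) (F : T -> {ffun 'I_n -> R}) :
  lin c (\sum_(k <- r | P k) F k) = \sum_(k <- r | P k) lin c (F k).
Proof.
rewrite /lin; under eq_bigr => i _ do rewrite sum_ffunE mulr_sumr.
by rewrite exchange_big.
Qed.

Lemma sum_basis_vec (I : {set 'I_n}) k : \sum_(i in I) basis_vec k i = (k \in I)%:R.
Proof.
have [kI|kNI] := boolP (k \in I).
  rewrite (bigD1 k) //= big1 => [|i /andP[_ ik]]; rewrite ffunE ?eqxx ?addr0 //.
  by rewrite (negbTE ik).
by rewrite big1 // => i iI; rewrite ffunE; case: eqP => // ik; rewrite -ik iI in kNI.
Qed.

Definition is_argmax (c : 'I_n -> R) (I : {set 'I_n}) i :=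
  (i \in I) && [forall j in I, c j <= c i].

Lemma argmax_exists c I : I != set0 -> exists i, is_argmax c I i.
Proof.
case/set0Pn=> k kI; have [i iI ci_max] := @arg_maxP _ _ _ k (mem I) c kI.
by exists i; apply/andP; split=> //; apply/forall_inP.
Qed.

Lemma lin_simplex_le c I y i : in_simplex I y -> is_argmax c I i -> lin c y <= c i.
Proof.
case=> y_ge0 y_out y_sum1 /andP[iI /forall_inP ci_max].
rewrite /lin -[c i]mulr1 -y_sum1 mulr_sumr ler_sum // => j _.
have [jI|jNI] := boolP (j \in I); last by rewrite y_out // !mulr0.
by rewrite mulrC [c i * _]mulrC ler_wpM2l // ci_max.
Qed.

(* The weights of the other vertices multiply positive gaps c i - c j in
   sum_j y_j (c i - c j) = 0, so they vanish. *)
Lemma lin_simplex_eq c I y i : in_simplex I y -> i \in I ->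
  (forall j, j \in I -> j != i -> c j < c i) -> lin c y = c i -> y = basis_vec i.
Proof.
case=> y_ge0 y_out y_sum1 iI ci_max lin_y.
have gap_sum0 : \sum_j y j * (c i - c j) = 0.
  under eq_bigr => j _ do rewrite mulrBr.
  rewrite sumrB -mulr_suml y_sum1 mul1r -{1}lin_y /lin.
  by under eq_bigr => j _ do rewrite mulrC; rewrite subrr.
have gap_ge0 j : predT j -> 0 <= y j * (c i - c j).
  have [jI|jNI] := boolP (j \in I); last by rewrite y_out // mul0r.
  have [->|ji] := eqVneq j i; first by rewrite subrr mulr0.
  by rewrite mulr_ge0 // subr_ge0 ltW // ci_max.
have y_off j : j != i -> y j = 0.
  move=> ji; have [jI|] := boolP (j \in I); last exact: y_out.
  move/eqP: (psumr_eq0P gap_ge0 gap_sum0 (i := j) isT).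
  rewrite mulf_eq0 subr_eq0 => /orP[/eqP //|/eqP cij].
  by have := ci_max j jI ji; rewrite cij ltxx.
apply/ffunP => j; rewrite ffunE.
have [->|ji] := eqVneq j i; last by rewrite y_off.
by rewrite -y_sum1 (bigD1 i) //= big1 ?addr0 // => k /y_off.
Qed.

End LinearFunctionals.

Section NestohedronVertices.
Variables (R : realFieldType) (n : nat) (B : {set {set 'I_n}}).
Hypothesis B_neq0 : forall I, I \in B -> I != set0.
Variable i0 : 'I_n.

Definition nesto_point (h : {set 'I_n} -> 'I_n) : {ffun 'I_n -> R} :=
  \sum_(I in B) basis_vec R (h I).

(* i0 is a junk value, only reached when I is empty. *)
Definition argmax (c : 'I_n -> R) I := odflt i0 [pick i | is_argmax c I i].

Definition unique_argmax (c : 'I_n -> R) := forall I, I \in B ->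
  forall i j, is_argmax c I i -> is_argmax c I j -> i = j.

Local Notation P := (@nestohedron R n B).

Lemma argmaxP c I : I \in B -> is_argmax c I (argmax c I).
Proof.
move=> IB; rewrite /argmax; case: pickP => [i //|no_argmax].
by have [i] := argmax_exists c (B_neq0 IB); rewrite no_argmax.
Qed.

Lemma nesto_point_mem h : (forall I, I \in B -> h I \in I) -> P (nesto_point h).
Proof.
move=> hI; exists (fun I => basis_vec R (h I)); split=> // I IB; split.
- by move=> k; rewrite ffunE ler0n.
- by move=> k; rewrite ffunE; case: eqP => // ->; rewrite hI.
- rewrite (bigD1 (h I)) //= big1 ?ffunE ?eqxx ?addr0 // => k kh.
  by rewrite ffunE (negbTE kh).
Qed.

Lemma nesto_point_max c h : (forall I, I \in B -> is_argmax c I (h I)) ->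
  maximizer P c (nesto_point h).
Proof.
move=> h_max; split; first by apply: nesto_point_mem => I /h_max /andP[].
move=> _ [y [yS ->]]; rewrite !lin_sum ler_sum // => I IB.
by rewrite lin_basis_vec; apply: lin_simplex_le (yS I IB) (h_max I IB).
Qed.

Lemma argmax_lt c I i j : unique_argmax c -> I \in B -> is_argmax c I i ->
  j \in I -> j != i -> c j < c i.
Proof.
move=> Uc IB i_max jI ji; have /andP[_ /forall_inP ci_max] := i_max.
rewrite lt_neqAle ci_max // andbT; apply: contra ji => /eqP cji.
have j_max : is_argmax c I j.
  by rewrite /is_argmax jI; apply/forall_inP => k kI; rewrite cji ci_max.
by rewrite (Uc I IB j i j_max i_max).
Qed.

Lemma maximizer_unique c y : unique_argmax c -> maximizer P c y ->
  y = nesto_point (argmax c).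
Proof.
move=> Uc [[z [zS ->]] z_max]; apply: eq_bigr => I IB.
have gap_ge0 J : J \in B -> 0 <= lin c (basis_vec R (argmax c J)) - lin c (z J).
  move=> JB; rewrite subr_ge0 lin_basis_vec.
  exact: lin_simplex_le (zS J JB) (argmaxP c JB).
have gap_sum0 : \sum_(J in B) (lin c (basis_vec R (argmax c J)) - lin c (z J)) = 0.
  apply/eqP; rewrite eq_le sumr_ge0 // andbT sumrB subr_le0 -!lin_sum.
  exact: z_max _ (nesto_point_max (fun J JB => argmaxP c JB)).1.
move/eqP: (psumr_eq0P gap_ge0 gap_sum0 IB); rewrite subr_eq0 lin_basis_vec.
have /andP[aI _] := argmaxP c IB.
move/eqP/esym; apply: lin_simplex_eq (zS I IB) aI _ => j jI ja.
exact: argmax_lt Uc IB (argmaxP c IB) jI ja.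
Qed.

(* Two argmaxes i != j on some I in B would give two maximizers differing in
   the i-th coordinate. *)
Lemma unique_maximizer_argmax c x :
  (forall y, maximizer P c y -> y = x) -> unique_argmax c.
Proof.
move=> x_uniq I IB i j i_max j_max; apply/eqP; apply/negPn/negP => ij.
pose h k J := if J == I then k else argmax c J.
have h_max k : is_argmax c I k -> forall J, J \in B -> is_argmax c J (h k J).
  by move=> k_max J; rewrite /h; case: eqP => [-> //|_]; apply: argmaxP.
have := x_uniq _ (nesto_point_max (h_max i i_max)).
move/(congr1 (fun y : {ffun 'I_n -> R} => y i)).
rewrite -(x_uniq _ (nesto_point_max (h_max j j_max))) !sum_ffunE.
rewrite (bigD1 I) //= [in RHS](bigD1 I) //= /h eqxx.
under [in RHS]eq_bigr => J /andP[_ /negbTE ->] do [].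
under eq_bigr => J /andP[_ /negbTE ->] do [].
by move/addIr; rewrite !ffunE eqxx (negbTE ij) => /eqP; rewrite oner_eq0.
Qed.

Lemma is_vertexP v :
  is_vertex P v <-> exists c, unique_argmax c /\ v = nesto_point (argmax c).
Proof.
split=> [[c [c_max c_uniq]]|[c [Uc ->]]].
  have Uc := unique_maximizer_argmax c_uniq.
  by exists c; split=> //; apply: maximizer_unique.
exists c; split; first exact: nesto_point_max (fun I IB => argmaxP c IB).
by move=> y; apply: maximizer_unique.
Qed.

Lemma genericP (f : 'I_n -> nat) :
  generic P f <-> (forall i, (0 < f i)%N) /\ unique_argmax (fun i => (f i)%:R).
Proof.
split=> [[f_gt0 [x [_ x_uniq]]]|[f_gt0 Uf]].
  by split=> //; apply: unique_maximizer_argmax x_uniq.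
split=> //; exists (nesto_point (argmax (fun i => (f i)%:R))); split.
  exact: nesto_point_max (fun I IB => argmaxP _ IB).
by move=> y; apply: maximizer_unique.
Qed.

End NestohedronVertices.

Section NestedSets.
Variables (R : realFieldType) (n : nat) (B : {set {set 'I_n}}).
Hypothesis B_neq0 : forall I, I \in B -> I != set0.
Hypothesis B_set1 : forall i : 'I_n, [set i] \in B.
Hypothesis B_setU : forall I J, I \in B -> J \in B -> I :&: J != set0 -> I :|: J \in B.
Hypothesis B_setT : [set: 'I_n] \in B.
Variables (i0 : 'I_n) (c : 'I_n -> R).
Hypothesis Uc : unique_argmax B c.

Local Notation a := (argmax i0 c).
Local Notation v := (nesto_point R B a).

Lemma argmax_mem I : I \in B -> a I \in I.
Proof. by move=> IB; case/andP: (argmaxP B_neq0 i0 c IB). Qed.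

Lemma argmax_ge I j : I \in B -> j \in I -> c j <= c (a I).
Proof. by move=> IB; case/andP: (argmaxP B_neq0 i0 c IB) => _ /forall_inP; apply. Qed.

Lemma argmax_eq I i : I \in B -> is_argmax c I i -> a I = i.
Proof. by move=> IB i_max; apply: (Uc IB (argmaxP B_neq0 i0 c IB) i_max). Qed.

Lemma sum_nesto_vertex (I : {set 'I_n}) :
  \sum_(i in I) v i = (#|[set J in B | a J \in I]|)%:R.
Proof.
under eq_bigr => i _ do rewrite sum_ffunE.
rewrite exchange_big /=; under eq_bigr => J _ do rewrite sum_basis_vec.
rewrite -natr_sum -sum1_card; congr _%:R.
rewrite big_mkcond [RHS]big_mkcond /=; apply: eq_bigr => J _.
by rewrite inE; case: (J \in B); case: (a J \in I).
Qed.

Definition argmax_closed (I : {set 'I_n}) :=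
  (I \in B) && [forall J in B, (a J \in I) ==> (J \subset I)].

Lemma nesto_vertex_face (I : {set 'I_n}) :
  (\sum_(i in I) v i == (#|[set J in B | J \subset I]|)%:R) =
  [forall J in B, (a J \in I) ==> (J \subset I)].
Proof.
rewrite sum_nesto_vertex eqr_nat eq_sym.
have sub_in_a : [set J in B | J \subset I] \subset [set J in B | a J \in I].
  apply/subsetP => J; rewrite !inE => /andP[JB JI]; rewrite JB.
  exact: (subsetP JI) (argmax_mem JB).
rewrite (subset_leqif_cards sub_in_a).2 eqEsubset sub_in_a /=.
apply/subsetP/forall_inP => [sub J JB|closed J]; last first.
  by rewrite !inE => /andP[JB aJ]; rewrite JB (implyP (closed J JB)).
by apply/implyP => aJ; have := sub J; rewrite !inE JB aJ => /(_ isT).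
Qed.

Lemma mem_nestedv' I : (I \in nestedv' B v) = argmax_closed I.
Proof.
rewrite in_setU in_set1 inE /argmax_closed.
have [->|IT] := eqVneq I setT; last by rewrite orbF nesto_vertex_face.
by rewrite orbT B_setT; symmetry; apply/forall_inP => J _; rewrite subsetT implybT.
Qed.

Lemma mem_nestedv I : I \in nestedv B v -> argmax_closed I.
Proof. by rewrite -mem_nestedv' in_setU => ->. Qed.

Definition block (i : 'I_n) := [set i] :|: \bigcup_(J in B | a J == i) J.

Lemma block_in_B i : block i \in B.
Proof.
apply: (big_rec (fun X => [set i] :|: X \in B)); first by rewrite setU0.
move=> J X /andP[JB /eqP aJ] XB; rewrite setUCA; apply: B_setU => //.
by apply/set0Pn; exists i; rewrite !inE eqxx andbT -aJ argmax_mem.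
Qed.

Lemma block_self i : i \in block i.
Proof. by rewrite !inE eqxx. Qed.

Lemma sub_block J : J \in B -> J \subset block (a J).
Proof.
move=> JB; apply: subset_trans (subsetUr _ _).
by apply: bigcup_sup; rewrite JB eqxx.
Qed.

Lemma block_le k i : k \in block i -> c k <= c i.
Proof.
rewrite !inE => /orP[/eqP -> //|/bigcupP[J /andP[JB /eqP <-] kJ]].
exact: argmax_ge.
Qed.

Lemma argmax_block i : a (block i) = i.
Proof.
apply: argmax_eq (block_in_B i) _.
by rewrite /is_argmax block_self; apply/forall_inP => k; apply: block_le.
Qed.

Lemma block_closed i : argmax_closed (block i).
Proof.
rewrite /argmax_closed block_in_B; apply/forall_inP => J JB; apply/implyP => aJi.
have JUB : J :|: block i \in B.
  by apply: B_setU (block_in_B i) _ => //; apply/set0Pn; exists (a J); rewrite inE argmax_mem.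
have a_JU : a (J :|: block i) = i.
  apply: argmax_eq JUB _; rewrite /is_argmax inE block_self orbT.
  apply/forall_inP => k; rewrite inE => /orP[kJ|]; last exact: block_le.
  exact: le_trans (argmax_ge JB kJ) (block_le aJi).
by apply: subset_trans (subsetUl J (block i)) _; rewrite -{2}a_JU sub_block.
Qed.

Lemma argmax_closedE I : argmax_closed I -> I = block (a I).
Proof.
case/andP=> IB /forall_inP closed; apply/eqP; rewrite eqEsubset sub_block //=.
by apply: (implyP (closed _ (block_in_B (a I)))); rewrite argmax_block argmax_mem.
Qed.

Lemma block_trans k j : k \in block j -> block k \subset block j.
Proof.
case/andP: (block_closed j) => _ /forall_inP closed kj.
by apply: (implyP (closed _ (block_in_B k))); rewrite argmax_block.
Qed.

Lemma block_inj : injective block.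
Proof. by move=> i j eq_ij; rewrite -(argmax_block i) eq_ij argmax_block. Qed.

Lemma block_anti i j : i \in block j -> j \in block i -> i = j.
Proof.
move=> ij ji; apply: block_inj; apply/eqP.
by rewrite eqEsubset !block_trans.
Qed.

Lemma ielt_block i : ielt B v (block i) = Some i.
Proof.
suff only_i k : (k \in block i :\: \bigcup_(J in nestedv B v | J \proper block i) J) = (k == i).
  by rewrite /ielt; case: pickP => [k|/(_ i)]; rewrite only_i ?eqxx // => /eqP ->.
rewrite in_setD; have [->|ki] := eqVneq k i.
  rewrite block_self andbT; apply/bigcupP => -[J /andP[/mem_nestedv JC]].
  rewrite (argmax_closedE JC) properE => /andP[_ /negP iJ /block_trans]; exact: iJ.
apply/negbTE; rewrite negb_and negbK orbC -implybE.
apply/implyP => ki_block.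
apply/bigcupP; exists (block k); last exact: block_self.
have k_lt_i : block k \proper block i.
  rewrite properE block_trans //=; apply: contra ki => /subsetP/(_ i (block_self i)).
  by move/(block_anti ki_block)->.
rewrite k_lt_i andbT inE block_in_B nesto_vertex_face /=.
case/andP: (block_closed k) => _ ->; rewrite andbT.
by apply: contraTneq k_lt_i => ->; rewrite properE subsetT andbF.
Qed.

Lemma lev_block i j : lev B v i j = (i \in block j).
Proof.
apply/idP/idP => [|ij].
  case/existsP => I /andP[+ /existsP[J /andP[+ /and3P[/eqP Ii /eqP Jj IJ]]]].
  rewrite !mem_nestedv' => /argmax_closedE EI /argmax_closedE EJ.
  move: Ii Jj IJ; rewrite EI EJ !ielt_block => -[<-] [<-] /subsetP; apply.
  exact: block_self.
apply/existsP; exists (block i); rewrite mem_nestedv' block_closed /=.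
apply/existsP; exists (block j); rewrite mem_nestedv' block_closed.
by rewrite !ielt_block !eqxx block_trans.
Qed.

Definition block_interval u w := [set z | (u \in block z) && (z \in block w)].

Lemma mem_block_interval u w y :
  (y \in block_interval u w) = (u \in block y) && (y \in block w).
Proof. exact: in_set. Qed.

Lemma block_interval_properl u z w : u \in block z -> z \in block w -> z != w ->
  block_interval u z \proper block_interval u w.
Proof.
move=> uz zw zNw; rewrite properE; apply/andP; split.
  apply/subsetP => y; rewrite !mem_block_interval => /andP[-> yz] /=.
  exact: (subsetP (block_trans zw)) _ yz.
apply/subsetP => /(_ w); rewrite !mem_block_interval block_self (subsetP (block_trans zw)) //.
by move=> /(_ isT) /andP[_ wz]; rewrite (block_anti zw wz) eqxx in zNw.
Qed.

Lemma block_interval_properr u z w : u \in block z -> z \in block w -> z != u ->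
  block_interval z w \proper block_interval u w.
Proof.
move=> uz zw zNu; rewrite properE; apply/andP; split.
  apply/subsetP => y; rewrite !mem_block_interval => /andP[zy ->]; rewrite andbT.
  exact: (subsetP (block_trans zy)) _ uz.
apply/subsetP => /(_ u); rewrite !mem_block_interval block_self (subsetP (block_trans zw)) //.
by move=> /(_ isT) /andP[zu _]; rewrite (block_anti zu uz) eqxx in zNu.
Qed.

(* Strict monotonicity along covers propagates to the whole order, by
   induction on the size of the interval [u, w]. *)
Lemma cover_lt (g : 'I_n -> nat) :
  (forall u w, coverv B v u w -> (g u < g w)%N) ->
  forall u w, u \in block w -> u != w -> (g u < g w)%N.
Proof.
move=> g_cover u w.
suff: forall k u w, (#|block_interval u w| <= k)%N ->
    u \in block w -> u != w -> (g u < g w)%N.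
  by move/(_ _ u w (leqnn _)).
elim=> [|k IH] {}u {}w.
  rewrite leqn0 cards_eq0 => /eqP empty uw _.
  have : w \in block_interval u w by rewrite mem_block_interval uw block_self.
  by rewrite empty inE.
move=> size_k uw uNw; have [|] := boolP (coverv B v u w); first exact: g_cover.
rewrite /coverv uNw lev_block uw negbK => /existsP[z /and4P[zNu zNw]].
rewrite !lev_block => uz zw.
have lt_k (X : {set 'I_n}) : X \proper block_interval u w -> (#|X| <= k)%N.
  by move/proper_card => lt; rewrite -ltnS (leq_trans lt).
apply: (@ltn_trans (g z)).
  by apply: (IH u z (lt_k _ (block_interval_properl uz zw zNw)) uz); rewrite eq_sym.
exact: (IH z w (lt_k _ (block_interval_properr uz zw zNu)) zw zNw).
Qed.

Lemma tree_partition_iff (g : 'I_n -> nat) :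
  (forall u w, coverv B v u w -> (g u < g w)%N) <->
  (forall I, I \in B -> forall j, j \in I -> j != a I -> (g j < g (a I))%N).
Proof.
split=> [g_cover I IB j jI ja | g_max u w /and3P[uNw + _]].
  exact: cover_lt g_cover _ _ ((subsetP (sub_block IB)) _ jI) ja.
rewrite lev_block => uw; have := g_max _ (block_in_B w) u uw.
by rewrite argmax_block; apply.
Qed.

End NestedSets.

Section TreePartitions.
Variables (R : realFieldType) (n : nat) (B : {set {set 'I_n}}).
Hypothesis B_neq0 : forall I, I \in B -> I != set0.
Hypothesis B_set1 : forall i : 'I_n, [set i] \in B.
Hypothesis B_setU : forall I J, I \in B -> J \in B -> I :&: J != set0 -> I :|: J \in B.
Hypothesis B_setT : [set: 'I_n] \in B.
Variable i0 : 'I_n.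

Local Notation P := (@nestohedron R n B).
Local Notation natf g := (fun i => (g i)%:R : R).
Local Notation vertex_of c := (nesto_point R B (argmax i0 c)).

Lemma nesto_vertices_enum :
  exists vs : seq {ffun 'I_n -> R}, uniq vs /\ forall v, v \in vs <-> is_vertex P v.
Proof.
pose points := [seq nesto_point R B h | h : {ffun {set 'I_n} -> 'I_n} <- enum {: {ffun {set 'I_n} -> 'I_n}}].
exists (undup [seq x <- points | asbool (is_vertex P x)]); split; first exact: undup_uniq.
move=> v; rewrite mem_undup mem_filter; split=> [/andP[/asboolP] //|v_vertex].
apply/andP; split; first exact/asboolP.
have [c [_ ->]] := (is_vertexP B_neq0 i0 v).1 v_vertex.
apply/mapP; exists [ffun I => argmax i0 c I]; first by rewrite mem_enum.
by apply: eq_bigr => I _; rewrite ffunE.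
Qed.

Lemma tree_partitionE (c : 'I_n -> R) (g : 'I_n -> nat) : unique_argmax B c ->
  (forall u w, coverv B (vertex_of c) u w -> (g u < g w)%N) <->
  unique_argmax B (natf g) /\ vertex_of (natf g) = vertex_of c.
Proof.
move=> Uc; split=> [/(tree_partition_iff B_neq0 B_set1 B_setU B_setT i0 Uc g) g_max
                  | [Ug <-]]; last first.
  apply/(tree_partition_iff B_neq0 B_set1 B_setU B_setT i0 Ug g) => I IB j jI ja.
  by rewrite -(ltr_nat R) (argmax_lt Ug IB (argmaxP B_neq0 i0 _ IB) jI ja).
have argmax_g I i : I \in B -> is_argmax (natf g) I i -> i = argmax i0 c I.
  move=> IB /andP[iI /forall_inP gi_max]; apply/eqP/negPn/negP => ia.
  have := g_max I IB i iI ia; rewrite ltnNge -(ler_nat R).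
  by rewrite gi_max // (argmax_mem B_neq0 i0 c IB).
split=> [I IB i j /(argmax_g I i IB) -> /(argmax_g I j IB) -> //|].
by apply: eq_bigr => I IB; rewrite -(argmax_g I _ IB (argmaxP B_neq0 i0 _ IB)).
Qed.

Lemma tree_partitionP v (g : 'I_n -> nat) : is_vertex P v ->
  reflect ((forall i, (0 < g i)%N) /\ unique_argmax B (natf g) /\ vertex_of (natf g) = v)
    ([forall i, (0 < g i)%N] && [forall u, forall w, coverv B v u w ==> (g u < g w)%N]).
Proof.
move=> v_vertex; apply: (iffP andP) => [[/forallP g_gt0 /forallP g_cover] | [g_gt0 g_vertex]];
  have [c [Uc Ev]] := (is_vertexP B_neq0 i0 v).1 v_vertex; subst v.
  split=> //; apply/(tree_partitionE g Uc) => u w.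
  by move/forallP: (g_cover u) => /(_ w) /implyP.
have g_cover := (tree_partitionE g Uc).2 g_vertex.
by split; apply/forallP => u; last apply/forallP => w; last apply/implyP/g_cover.
Qed.

Lemma generic_count vs (g : 'I_n -> nat) : uniq vs ->
  (forall v, v \in vs <-> is_vertex P v) ->
  asbool (generic P g) = count (fun v =>
    [forall i, (0 < g i)%N] && [forall u, forall w, coverv B v u w ==> (g u < g w)%N]) vs
  :> nat.
Proof.
move=> vs_uniq vsP; have [/(genericP R B_neq0 i0)[g_gt0 Ug]|not_generic] := asboolP.
  have g_vertex : is_vertex P (vertex_of (natf g)).
    by apply/(is_vertexP B_neq0 i0); exists (natf g).
  rewrite (@eq_in_count _ _ (pred1 (vertex_of (natf g)))) ?count_uniq_mem //.
    by move/vsP: g_vertex => ->.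
  move=> v /vsP v_vertex /=; apply/(tree_partitionP g v_vertex)/eqP.
    by case=> _ [_ ->].
  by move=> <-.
rewrite (@eq_in_count _ _ pred0) ?count_pred0 // => v /vsP v_vertex.
apply/negbTE/(tree_partitionP g v_vertex) => -[g_gt0 [Ug _]].
by apply/not_generic/(genericP R B_neq0 i0).
Qed.

End TreePartitions.

Theorem mainTheorem6 (R : realFieldType) (n : nat) (B : {set {set 'I_n}}) :
  building_set B -> connected_bs B ->
  (exists vs : seq {ffun 'I_n -> R}, uniq vs /\
      forall v, v \in vs <-> is_vertex (@nestohedron R n B) v) /\
  (forall vs : seq {ffun 'I_n -> R}, uniq vs ->
      (forall v, v \in vs <-> is_vertex (@nestohedron R n B) v) ->
      forall (N : nat) (m : seq nat),
        coefF (@nestohedron R n B) N m = (\sum_(v <- vs) coefT B v N m)%N).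
Proof.
move=> [B_neq0 B_set1 B_setU] B_setT; case/set0Pn: (B_neq0 _ B_setT) => i0 _.
split; first exact: nesto_vertices_enum B_neq0 i0.
move=> vs vs_uniq vsP N m; rewrite /coefF /coefT -sum1dep_card big_mkcond /=.
under [RHS]eq_bigr => v _ do rewrite -sum1dep_card big_mkcond /=.
rewrite exchange_big /=; apply: eq_bigr => f _.
have [_|_] := boolP (perm_eq [seq val (f i) | i <- enum 'I_n] m); last first.
  by rewrite andbF big1 // => v _; rewrite andbF.
rewrite andbT; under eq_bigr => v _ do rewrite andbT.
rewrite -big_mkcond sum1_count.
exact: (generic_count B_neq0 B_set1 B_setU B_setT i0 (fun i => val (f i)) vs_uniq vsP).
Qed.
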